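(* Let $p$ be an odd prime with $p\mid n$, $G=\mathrm{PGL}_n(\mathbb{C})$, and let $\bar A$ be a toral elementary abelian $p$-subgroup of $G$ with $C_G(\bar A)$ connected. Then $\bar A$ has a generating set (an $\mathbb{F}_p$-basis) none of whose elements is $G$-conjugate to $e_{n/p}$.
   Context: Toral: contained in a maximal torus. With $\alpha=e^{2\pi i/p}$ and $n=pk$, $e_{n/p}$ is the image in $G$ of $\mathrm{diag}(I_k,\alpha I_k,\dots,\alpha^{p-1}I_k)$. *)

From HB Require Import structures.
From mathcomp Require Import all_boot all_order all_algebra.
From mathcomp Require Import all_classical all_reals all_analysis.
From mathcomp Require Import complex.
Set Implicit Arguments. Unset Strict Implicit. Unset Printing Implicit Defensive.
Import Order.TTheory GRing.Theory Num.Theory.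
Import numFieldNormedType.Exports.
Local Open Scope ring_scope.
Local Open Scope classical_set_scope.

(* Elements of G = PGL_n(C) are represented by invertible matrices in
   'M[R[i]]_n, two matrices representing the same element of G iff they
   differ by a nonzero scalar.  A subgroup of G is represented by its full
   preimage in GL_n(C). *)

Section PGL.
Variables (R : realType) (n : nat).
Local Notation C := (R[i]).
Local Notation M := ('M[C]_n).

Definition pgl_eq (x y : M) : Prop := exists c : C, c != 0 /\ x = c *: y.

(* matrix powers and ordered products, valid for every n *)
Definition mxpow (x : M) (k : nat) : M := iter k (mulmx x) 1%:M.

Definition mxprod (r : nat) (b : 'I_r -> M) (k : 'I_r -> nat) : M :=
  \big[mulmx/1%:M]_(i < r) mxpow (b i) (k i).

Definition pgl_subgroup (A : set M) : Prop :=
  [/\ (forall a, A a -> a \in unitmx),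
      (forall c : C, c != 0 -> A (c%:M)),
      (forall a b, A a -> A b -> A (a *m b)) &
      (forall a, A a -> A (invmx a))].

Definition pgl_elem_abelian (p : nat) (A : set M) : Prop :=
  [/\ pgl_subgroup A,
      (exists s : seq M, forall a, A a -> exists2 b, b \in s & pgl_eq a b),
      (forall a b, A a -> A b -> pgl_eq (a *m b) (b *m a)) &
      (forall a, A a -> pgl_eq (mxpow a p) 1%:M)].

(* toral: contained in a maximal torus of PGL_n(C), i.e. conjugate into
   the image of the diagonal torus *)
Definition pgl_toral (A : set M) : Prop :=
  exists2 g : M, g \in unitmx &
    forall a, A a -> is_diag_mx (g *m a *m invmx g).

Definition pgl_centralizer (A : set M) : set M :=
  [set g | g \in unitmx /\ forall a, A a -> pgl_eq (g *m a *m invmx g) a].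

(* (path-)connectedness of a set of complex matrices, for the classical
   topology of C^(n*n) = R^(2*n*n) *)
Definition mx_path_connected (S : set M) : Prop :=
  forall x y, S x -> S y ->
    exists gam : R -> M,
      [/\ gam 0 = x, gam 1 = y,
          (forall t, 0 <= t <= 1 -> S (gam t)) &
          (forall i j, {within `[(0:R), 1], continuous (fun t : R => complex.Re (gam t i j))}
                    /\ {within `[(0:R), 1], continuous (fun t : R => complex.Im (gam t i j))})].

Definition pgl_conj (x y : M) : Prop :=
  exists2 g : M, g \in unitmx & pgl_eq (g *m x *m invmx g) y.

Definition pgl_Fp_basis (p : nat) (A : set M) (r : nat) (b : 'I_r -> M) : Prop :=
  [/\ (forall i, A (b i)),
      (forall a, A a -> exists k : 'I_r -> 'I_p, pgl_eq a (mxprod b (fun i => nat_of_ord (k i)))) &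
      (forall k : 'I_r -> 'I_p, pgl_eq (mxprod b (fun i => nat_of_ord (k i))) 1%:M ->
          forall i, nat_of_ord (k i) = 0%N)].
End PGL.

Definition alpha_root (R : realType) (p : nat) : R[i] :=
  (cos (2 * pi / p%:R) +i* sin (2 * pi / p%:R))%C.

(* e_{n/p}: diag(I_k, alpha I_k, ..., alpha^(p-1) I_k), k = n/p *)
Definition e_np (R : realType) (n p : nat) : 'M[R[i]]_n :=
  diag_mx (\row_(j < n) (alpha_root R p) ^+ (j %/ (n %/ p))).

(** Diagonalise [A] simultaneously; the weight of [a] is the vector of
   exponents [v] in [F_p^n] with [a ~ diag(zeta^v_j)] up to a scalar.  Let [V]
   be the span of all weights and [W] the span of the weights of elements of
   nonzero trace.  The trace [sum_j zeta^v_j] is a Fourier transform of the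
   multiplicities of the coordinate functionals [v |-> v_j] on [V], so a
   functional [chi] on [V] vanishing on [W] leaves these multiplicities
   invariant under translation by [chi], and some permutation matrix then
   conjugates each [a] to [zeta^chi(a) a].  This matrix centralizes the image
   of [A] in [G]; but [C_G(A)] is connected, and along a path from [1] the
   commutation scalar is a continuous p-th root of unity, hence [1].  So
   [chi = 0] and [V = W]: a basis of [W] made of weights of elements of
   nonzero trace lifts to a generating set, none of whose members is
   conjugate to the traceless [e_{n/p}]. *)

From HB Require Import structures.
From mathcomp Require Import all_boot all_order all_algebra perm.
From mathcomp Require Import all_classical all_reals all_analysis.
From mathcomp Require Import complex.
From mathcomp Require Import ring.
Set Implicit Arguments. Unset Strict Implicit. Unset Printing Implicit Defensive.
Import Order.TTheory GRing.Theory Num.Theory.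
Import numFieldNormedType.Exports.
Local Open Scope ring_scope.
Local Open Scope classical_set_scope.

Lemma perm_of_card_fibers (I : finType) (T : eqType) (f g : I -> T) :
  (forall j, #|[pred k | f k == g j]| = #|[pred k | g k == g j]|) ->
  exists s : {perm I}, forall j, f (s j) = g j.
Proof.
move=> card_fib.
pose fib (h : I -> T) j := enum [pred k | h k == g j].
pose s j := nth j (fib f j) (index j (fib g j)).
have idx_lt j : (index j (fib g j) < size (fib f j))%N.
  by rewrite /fib -cardE card_fib cardE index_mem mem_enum inE /=.
have fs j : f (s j) = g j.
  by apply/eqP; have := mem_nth j (idx_lt j); rewrite mem_enum.
have s_inj : injective s.
  move=> j1 j2 eq_s.
  have eq_g : g j1 = g j2 by rewrite -!fs eq_s.
  have eq_fib h : fib h j1 = fib h j2 by rewrite /fib eq_g.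
  have j12 : j1 \in fib g j2 /\ j2 \in fib g j2 by rewrite !mem_enum !inE eq_g.
  move: eq_s (idx_lt j1) (idx_lt j2); rewrite /s !eq_fib => eq_s lt1 lt2.
  rewrite (set_nth_default j2 j1 lt1) in eq_s.
  move/eqP: eq_s; rewrite nth_uniq ?enum_uniq // => /eqP.
  by apply: index_inj; case: j12.
by exists (perm s_inj) => j; rewrite permE fs.
Qed.

Lemma unitmx_neq0 (K : comUnitRingType) n (Y : 'M[K]_n) :
  (0 < n)%N -> Y \in unitmx -> Y != 0.
Proof.
move=> n_gt0 Y_unit; apply/eqP => Y0; move: (mulmxV Y_unit); rewrite Y0 mul0mx.
move/matrixP/(_ (Ordinal n_gt0) (Ordinal n_gt0)); rewrite !mxE eqxx /=.
by move/eqP; rewrite eq_sym oner_eq0.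
Qed.

Lemma exists_basis_sub (K : fieldType) (vT : vectType K) (L : seq vT) :
  exists2 Z : seq vT, basis_of <<L>> Z & {subset Z <= L}.
Proof.
elim: L => [|x L [Z Z_basis Z_sub]]; first by exists [::]; rewrite ?span_nil ?nil_basis.
have [/eqP span_Z Z_free] := andP Z_basis.
have [xZ|xZ] := boolP (x \in <<Z>>%VS).
  exists Z; last by move=> y /Z_sub; rewrite inE orbC => ->.
  suff -> : <<x :: L>>%VS = <<L>>%VS by [].
  by rewrite span_cons -span_Z; apply/addv_idPr; rewrite -memvE.
exists (x :: Z); last by move=> y; rewrite !inE => /orP[->|/Z_sub ->]; rewrite ?orbT.
by rewrite /basis_of free_cons xZ Z_free !span_cons span_Z eqxx.
Qed.

(** * Roots of unity *)

Lemma sum_prim_root_eq0 (F : idomainType) (k : nat) (z : F) :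
  (1 < k)%N -> k.-primitive_root z -> \sum_(i < k) z ^+ i = 0.
Proof.
move=> k_gt1 zk; have := subrX1 z k; rewrite prim_expr_order // subrr => /esym/eqP.
rewrite mulf_eq0 subr_eq0 => /orP[/eqP z1|/eqP //].
by move: (eq_prim_root_expr zk 1 0); rewrite expr1 expr0 z1 eqxx modn_small ?mod0n.
Qed.

Lemma sum_expr_divn (F : nzSemiRingType) (x : F) (m k : nat) : (0 < k)%N ->
  \sum_(0 <= j < m * k) x ^+ (j %/ k) = (\sum_(i < m) x ^+ i) *+ k.
Proof.
move=> k_gt0; elim: m => [|m IHm]; first by rewrite mul0n big_geq // big_ord0 mul0rn.
rewrite (big_cat_nat (n := m * k)) //= ?leq_mul2r ?leqnSn ?orbT // IHm.
rewrite big_ord_recr /= mulrnDl; congr (_ + _).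
rewrite -{1}[(m * k)%N]add0n big_addn mulSn addnK.
rewrite (eq_big_nat _ _ (F2 := fun _ => x ^+ m)) ?sumr_const_nat ?subn0 //.
by move=> j /andP[_ jk]; rewrite divnDr ?dvdn_mull // mulnK // divn_small.
Qed.

Section AlphaRoot.
Variables (R : realType) (p : nat).
Hypotheses (p_prime : prime p) (p_gt2 : (2 < p)%N).

Lemma alpha_rootX m : alpha_root R p ^+ m =
  (cos (m%:R * (2 * pi / p%:R)) +i* sin (m%:R * (2 * pi / p%:R)))%C.
Proof.
elim: m => [|m IHm]; first by rewrite expr0 mul0r cos0 sin0.
rewrite exprS IHm /alpha_root; set x := 2 * pi / p%:R.
rewrite -[m.+1]addn1 natrD mulrDl mul1r cosD sinD.
by apply/eqP; rewrite eq_complex /=; apply/andP; split; apply/eqP; ring.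
Qed.

Lemma alpha_root_prim : p.-primitive_root (alpha_root R p).
Proof.
have p_gt0 := prime_gt0 p_prime.
have alpha_p : alpha_root R p ^+ p = 1.
  rewrite alpha_rootX; have -> : p%:R * (2 * pi / p%:R) = pi *+ 2 :> R.
    by rewrite mulrCA mulfV ?mulr1 ?mulr_natl // pnatr_eq0 -lt0n.
  by rewrite cos2pi sin2pi.
have alpha_neq1 : alpha_root R p != 1.
  have : 0 < sin (2 * pi / p%:R) :> R.
    apply: sin_gt0_pi; rewrite divr_gt0 ?mulr_gt0 ?pi_gt0 ?ltr0n //= ltr_pdivrMr ?ltr0n //.
    by rewrite mulrC ltr_pM2l ?pi_gt0 // (ltr_nat R 2).
  by apply: contraTneq => /(congr1 (@complex.Im R)) /= ->; rewrite ltxx.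
have [m m_prim m_dvd] := prim_order_exists p_gt0 alpha_p.
have [m1|m_neq1] := eqVneq m 1%N.
  by move: m_prim alpha_neq1; rewrite m1 => /prim_expr_order; rewrite expr1 => ->; rewrite eqxx.
by move: m_prim; rewrite (prime_nt_dvdP p_prime m_neq1 m_dvd).
Qed.

Lemma mxtrace_e_np n : (p %| n)%N -> \tr (e_np R n p) = 0.
Proof.
move=> p_dvd_n; rewrite /e_np mxtrace_diag.
under eq_bigr do rewrite mxE.
have [->|n_gt0] := posnP n; first by rewrite big_ord0.
have k_gt0 : (0 < n %/ p)%N by rewrite divn_gt0 ?prime_gt0 // dvdn_leq.
rewrite -(big_mkord xpredT (fun j => _ ^+ (j %/ (n %/ p))%N)) -{1}(divnK p_dvd_n).
by rewrite [(_ * p)%N]mulnC sum_expr_divn // sum_prim_root_eq0 ?mul0rn ?alpha_root_prim // ltnW.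
Qed.
End AlphaRoot.

(** * Characters of F_p *)

Section FpCharacter.
Variables (C : numFieldType) (p : nat) (z : C).
Hypotheses (p_prime : prime p) (z_prim : p.-primitive_root z).

Definition expFp (x : 'F_p) : C := z ^+ x.

Lemma ltn_Fp (x : 'F_p) : (x < p)%N.
Proof. by case: x => m /=; rewrite Fp_cast. Qed.

Lemma expFpD : {morph expFp : x y / x + y >-> x * y}.
Proof.
by move=> x y; rewrite /expFp /= expr_mod ?exprD // Fp_cast ?prim_expr_order.
Qed.

Lemma expFp0 : expFp 0 = 1.
Proof. exact: expr0. Qed.

Lemma expFp_neq0 x : expFp x != 0.
Proof. by rewrite expf_neq0 // (prim_root_eq0 z_prim) -lt0n prime_gt0. Qed.

Lemma expFp_inj : injective expFp.
Proof.
move=> x y /eqP; rewrite /expFp (eq_prim_root_expr z_prim) !modn_small ?ltn_Fp //.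
by move/eqP/val_inj.
Qed.

Lemma expFp_eq1 x : (expFp x == 1) = (x == 0).
Proof. by rewrite -expFp0 (inj_eq expFp_inj). Qed.

Definition logFp (c : C) : 'F_p := odflt 0 [pick x | expFp x == c].

Lemma logFpK c : c ^+ p = 1 -> expFp (logFp c) = c.
Proof.
move=> /(prim_rootP z_prim)[i ->]; rewrite /logFp; case: pickP => [x /eqP //|no_log].
by have := no_log i%:R; rewrite /= /expFp val_Fp_nat // prim_expr_mod // eqxx.
Qed.

Variable n : nat.

Definition weight_trace (v : 'rV['F_p]_n) : C := \sum_j expFp (v 0 j).

Section Fourier.
Variable V : {vspace 'rV['F_p]_n}.

Lemma sum_expFp_additive (phi : 'rV['F_p]_n -> 'F_p) : {morph phi : u v / u + v} ->
  \sum_(v in V) expFp (phi v) = if [forall v in V, phi v == 0] then #|V|%:R else 0.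
Proof.
move=> phiD; case: ifPn => [/forallP phi0|].
  rewrite -sumr_const; apply: eq_bigr => v vV.
  by have := phi0 v; rewrite vV => /eqP ->; rewrite expFp0.
rewrite negb_forall => /existsP[v0]; rewrite negb_imply => /andP[v0V phi_v0].
set S := \sum_(v in V) _.
have shiftS : S = expFp (phi v0) * S.
  rewrite {1}/S (reindex_inj (addrI v0)) /= mulr_sumr.
  rewrite (eq_bigl [pred v | v \in V]) => [|v]; first by apply: eq_bigr => v _; rewrite phiD expFpD.
  by apply/idP/idP => [vV|/(memvD v0V)//]; have := memvB vV v0V; rewrite addrC addKr.
apply/eqP; move: shiftS => /eqP; rewrite -subr_eq0 -{1}[S]mul1r -mulrBl mulf_eq0.
by rewrite subr_eq0 eq_sym expFp_eq1 (negbTE phi_v0).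
Qed.

(* For [lam := fun v => v 0 k] this is coordinate [k] seen as a functional
   on [V]. *)
Definition restrV (lam : 'rV['F_p]_n -> 'F_p) : {ffun 'rV['F_p]_n -> 'F_p} :=
  [ffun v => if v \in V then lam v else 0].

Lemma restrVP l1 l2 : reflect {in V, l1 =1 l2} (restrV l1 == restrV l2).
Proof.
apply: (iffP eqP) => [/ffunP eq_l v vV|eq_l]; first by have := eq_l v; rewrite !ffunE vV.
by apply/ffunP => v; rewrite !ffunE; case: ifP => // /eq_l.
Qed.

Lemma card_coord_fiber (lam : 'rV['F_p]_n -> 'F_p) : {morph lam : u v / u + v} ->
  #|[pred k | restrV (fun v => v 0 k) == restrV lam]|%:R * #|V|%:R =
    \sum_(v in V) expFp (- lam v) * weight_trace v.
Proof.
move=> lamD.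
have inner k : \sum_(v in V) expFp (v 0 k - lam v) =
    if restrV (fun v => v 0 k) == restrV lam then #|V|%:R else 0.
  rewrite sum_expFp_additive => [|u v]; last by rewrite mxE lamD opprD addrACA.
  congr (if _ then _ else _); apply/forallP/restrVP => [eq0 v vV|eq_l v].
    by have := eq0 v; rewrite vV subr_eq0 => /eqP.
  by apply/implyP => /eq_l ->; rewrite subrr.
rewrite mulr_natl -sumr_const big_mkcond /=.
under eq_bigr do rewrite -inner.
rewrite exchange_big; apply: eq_bigr => v _; rewrite mulr_sumr.
by apply: eq_bigr => k _; rewrite addrC expFpD.
Qed.

Lemma exists_perm_shift (chi : 'rV['F_p]_n -> 'F_p) : {morph chi : u v / u + v} ->
  (forall v, v \in V -> weight_trace v != 0 -> chi v = 0) ->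
  exists s : 'S_n, forall j v, v \in V -> v 0 (s j) = v 0 j + chi v.
Proof.
move=> chiD chi0.
have coordD k : {morph (fun v : 'rV['F_p]_n => v 0 k) : u v / u + v} by move=> u v; rewrite mxE.
have card_V : #|V|%:R != 0 :> C.
  by rewrite pnatr_eq0 -lt0n; apply/card_gt0P; exists 0; rewrite mem0v.
have [|s fs] := @perm_of_card_fibers _ _ (fun k => restrV (fun v => v 0 k))
    (fun k => restrV (fun v => v 0 k + chi v)).
  move=> j; apply/eqP; rewrite -(eqr_nat C) -(inj_eq (mulIf card_V)).
  have -> : #|[pred k | restrV (fun v => v 0 k + chi v) == restrV (fun v => v 0 j + chi v)]| =
      #|[pred k | restrV (fun v => v 0 k) == restrV (fun v => v 0 j)]|.
    apply: eq_card => k; rewrite !inE; apply/restrVP/restrVP => eq_l v vV.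
      by apply: (addIr (chi v)); exact: eq_l.
    by rewrite eq_l.
  rewrite !card_coord_fiber // => [|u v]; last by rewrite coordD chiD addrACA.
  apply/eqP/eq_bigr => v vV; have [->|/(chi0 _ vV) ->] := eqVneq (weight_trace v) 0.
    by rewrite !mulr0.
  by rewrite addr0.
by exists s => j; apply/restrVP/eqP; rewrite fs.
Qed.

End Fourier.
End FpCharacter.

(** * Paths of matrices *)

Section PathCommute.
Variable R : realType.
Local Notation C := R[i].
Local Notation I01 := `[(0:R), 1].

Lemma complementary_zeros_eq0 (f h : R -> R) :
  {within I01, continuous f} -> {within I01, continuous h} ->
  (forall t, 0 <= f t) -> (forall t, 0 <= h t) ->
  (forall t, 0 <= t <= 1 -> f t * h t = 0) ->
  (forall t, 0 <= t <= 1 -> f t = 0 -> h t != 0) ->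
  f 0 = 0 -> f 1 = 0.
Proof.
move=> f_cont h_cont f_ge0 h_ge0 fh0 no_common_zero f0.
have [//|f1_neq0] := eqVneq (f 1) 0; exfalso.
have h1 : h 1 = 0.
  have one01 : 0 <= (1 : R) <= 1 by rewrite ler01 lexx.
  by move/eqP: (fh0 1 one01); rewrite mulf_eq0 (negbTE f1_neq0) => /eqP.
have [|t] := @IVT R (fun t => f t - h t) 0 1 0 ler01
    (fun x => continuousB (f_cont x) (h_cont x)).
  by rewrite f0 h1 sub0r subr0 ge_min le_max oppr_le0 h_ge0 f_ge0 orbT.
rewrite in_itv /= => t01 /eqP; rewrite subr_eq0 => /eqP fth.
have := fh0 t t01; rewrite -fth => /eqP; rewrite mulf_eq0 orbb => /eqP ft0.
by move: (no_common_zero t t01 ft0); rewrite -fth ft0 eqxx.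
Qed.

Definition mx_sqnorm m n (X : 'M[C]_(m, n)) : R :=
  \sum_i \sum_j (complex.Re (X i j) ^+ 2 + complex.Im (X i j) ^+ 2).

Lemma mx_sqnorm_ge0 m n (X : 'M[C]_(m, n)) : 0 <= mx_sqnorm X.
Proof. by do 2![apply: sumr_ge0 => ? _]; rewrite addr_ge0 ?sqr_ge0. Qed.

Lemma mx_sqnorm_eq0 m n (X : 'M[C]_(m, n)) : (mx_sqnorm X == 0) = (X == 0).
Proof.
have term_ge0 i j : 0 <= complex.Re (X i j) ^+ 2 + complex.Im (X i j) ^+ 2.
  by rewrite addr_ge0 ?sqr_ge0.
apply/eqP/eqP => [X0|->]; last first.
  by rewrite /mx_sqnorm big1 // => i _; rewrite big1 // => j _; rewrite mxE expr0n addr0.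
apply/matrixP => i j; rewrite mxE.
have /psumr_eq0P/(_ j isT)/eqP : \sum_j (complex.Re (X i j) ^+ 2 + complex.Im (X i j) ^+ 2) = 0.
  by apply: (psumr_eq0P _ X0) => // i' _; apply: sumr_ge0.
rewrite paddr_eq0 ?sqr_ge0 // !sqrf_eq0 => /(_ (fun j _ => term_ge0 i j)) /andP[].
by case: (X i j) => a b /= /eqP -> /eqP ->.
Qed.

Definition ccontinuous01 (f : R -> C) : Prop :=
  {within I01, continuous (fun t => complex.Re (f t))} /\
  {within I01, continuous (fun t => complex.Im (f t))}.

Lemma ccontinuous01_cst c : ccontinuous01 (fun=> c).
Proof. by split=> x; apply: cst_continuous. Qed.

Lemma ccontinuous01D f g : ccontinuous01 f -> ccontinuous01 g ->
  ccontinuous01 (fun t => f t + g t).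
Proof.
move=> [fRe fIm] [gRe gIm]; split => x.
  have -> : (fun t => complex.Re (f t + g t)) = (fun t => complex.Re (f t) + complex.Re (g t)).
    by apply/funext => t; case: (f t); case: (g t).
  exact: (continuousD (fRe x) (gRe x)).
have -> : (fun t => complex.Im (f t + g t)) = (fun t => complex.Im (f t) + complex.Im (g t)).
  by apply/funext => t; case: (f t); case: (g t).
exact: (continuousD (fIm x) (gIm x)).
Qed.

Lemma ccontinuous01M f g : ccontinuous01 f -> ccontinuous01 g ->
  ccontinuous01 (fun t => f t * g t).
Proof.
move=> [fRe fIm] [gRe gIm]; split => x.
  have -> : (fun t => complex.Re (f t * g t)) =
      (fun t => complex.Re (f t) * complex.Re (g t) - complex.Im (f t) * complex.Im (g t)).
    by apply/funext => t; case: (f t); case: (g t).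
  exact: (continuousB (continuousM (fRe x) (gRe x)) (continuousM (fIm x) (gIm x))).
have -> : (fun t => complex.Im (f t * g t)) =
    (fun t => complex.Re (f t) * complex.Im (g t) + complex.Im (f t) * complex.Re (g t)).
  by apply/funext => t; case: (f t) => a b; case: (g t) => c d /=; rewrite addrC.
exact: (continuousD (continuousM (fRe x) (gIm x)) (continuousM (fIm x) (gRe x))).
Qed.

Lemma ccontinuous01_sum (I : Type) (r : seq I) (P : pred I) (F : I -> R -> C) :
  (forall i, ccontinuous01 (F i)) -> ccontinuous01 (fun t => \sum_(i <- r | P i) F i t).
Proof.
move=> F_cont; elim: r => [|i r IHr].
  by under eq_fun do rewrite big_nil; apply: ccontinuous01_cst.
under eq_fun do rewrite big_cons.
by case: (P i) => //; apply: ccontinuous01D.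
Qed.

Lemma continuous01_mx_sqnorm m n (X : R -> 'M[C]_(m, n)) :
  (forall i j, ccontinuous01 (fun t => X t i j)) ->
  {within I01, continuous (fun t => mx_sqnorm (X t))}.
Proof.
move=> X_cont; apply: (continuous_big add_continuous) => i _.
apply: (continuous_big add_continuous) => j _ x.
have [XRe XIm] := X_cont i j.
exact: (continuousD (continuousM (XRe x) (XRe x)) (continuousM (XIm x) (XIm x))).
Qed.

Lemma path_connected_commute n (S : set 'M[C]_n) (a : 'M[C]_n) (Z : seq C) :
  (0 < n)%N -> mx_path_connected S -> S 1%:M ->
  (forall g, S g -> a *m g \in unitmx) ->
  (forall g, S g -> exists2 c, c \in Z & g *m a = c *: (a *m g)) ->
  forall g, S g -> g *m a = a *m g.
Proof.
move=> n_gt0 S_conn S1 ag_unit S_scalar g Sg.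
have [gam [gam0 gam1 gamS gam_cont]] := S_conn _ _ S1 Sg.
pose F c t := mx_sqnorm (gam t *m a - c *: (a *m gam t)).
have F_eq0 c t : (F c t == 0) = (gam t *m a == c *: (a *m gam t)).
  by rewrite mx_sqnorm_eq0 subr_eq0.
have F_cont c : {within I01, continuous (F c)}.
  apply: continuous01_mx_sqnorm => i j; under eq_fun do rewrite !mxE -mulNr.
  apply: ccontinuous01D; last apply: ccontinuous01M (ccontinuous01_cst _) _.
    by apply: ccontinuous01_sum => k; apply: ccontinuous01M (gam_cont i k) (ccontinuous01_cst _).
  by apply: ccontinuous01_sum => k; apply: ccontinuous01M (ccontinuous01_cst _) (gam_cont k j).
pose G t := \prod_(c <- Z | c != 1) F c t.
(* [F 1] and [G] have complementary zero sets along the path. *)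
suff /eqP : F 1 1 = 0 by rewrite F_eq0 gam1 scale1r => /eqP.
apply: (complementary_zeros_eq0 (F_cont 1) (h := G)) => [|t|t|t t01|t t01 /eqP|].
- by apply: (continuous_big mul_continuous) => c _; apply: F_cont.
- exact: mx_sqnorm_ge0.
- by apply: prodr_ge0 => c _; apply: mx_sqnorm_ge0.
- have [c cZ gam_c] := S_scalar _ (gamS t t01).
  apply/eqP; rewrite mulf_eq0 prodf_seq_eq0; have [c1|c_neq1] := eqVneq c 1.
    by rewrite F_eq0 gam_c c1 eqxx.
  by apply/orP; right; apply/hasP; exists c; rewrite // c_neq1 F_eq0 gam_c eqxx.
- rewrite F_eq0 scale1r => gam_comm; rewrite prodf_seq_neq0; apply/allP => c _.
  apply/implyP => c_neq1; rewrite F_eq0 (eqP gam_comm) -subr_eq0 -{1}[a *m _]scale1r -scalerBl.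
  rewrite scalemx_eq0 negb_or subr_eq0 eq_sym c_neq1 /=.
  by rewrite unitmx_neq0 // ag_unit //; apply: gamS.
- by apply/eqP; rewrite F_eq0 gam0 mulmx1 mul1mx scale1r.
Qed.

End PathCommute.

(** * Weights of a toral subgroup *)

Section MxPow.
Variables (R : realType) (n : nat).
Local Notation M := 'M[R[i]]_n.

Lemma mxpow_conj (u y : M) k : u \in unitmx ->
  mxpow (u *m y *m invmx u) k = u *m mxpow y k *m invmx u.
Proof.
move=> u_unit; elim: k => [|k IHk] /=; first by rewrite mulmx1 mulmxV.
by rewrite IHk !mulmxA mulmxKV.
Qed.

Lemma mxpowZ (c : R[i]) (y : M) k : mxpow (c *: y) k = c ^+ k *: mxpow y k.
Proof.
elim: k => [|k IHk] /=; first by rewrite expr0 scale1r.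
by rewrite IHk -scalemxAl -scalemxAr scalerA exprS.
Qed.

Lemma pgl_conj_mxtrace_eq0 (x y : M) : pgl_conj x y -> \tr y = 0 -> \tr x = 0.
Proof.
move=> [g g_unit [c [_ gxg]]] tr_y0; move: (congr1 mxtrace gxg).
by rewrite mxtraceZ tr_y0 mulr0 mxtrace_mulC mulmxA mulVmx // mul1mx.
Qed.
End MxPow.

Section Toral.
Variables (R : realType) (n p : nat) (A : set 'M[R[i]]_n) (g0 : 'M[R[i]]_n).
Hypotheses (p_prime : prime p) (p_odd : odd p) (n_gt0 : (0 < n)%N).
Hypotheses (A_elab : pgl_elem_abelian p A) (g0_unit : g0 \in unitmx).
Hypothesis g0_diag : forall a, A a -> is_diag_mx (g0 *m a *m invmx g0).

Local Notation C := R[i].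
Local Notation M := 'M[C]_n.
Local Notation zeta := (alpha_root R p).
Local Notation expo := (expFp zeta).

Let zeta_prim : p.-primitive_root zeta.
Proof. by apply: alpha_root_prim => //; apply: odd_prime_gt2. Qed.

Let expoD := expFpD p_prime zeta_prim.
Let expo_inj := expFp_inj p_prime zeta_prim.

Lemma A_unit a : A a -> a \in unitmx.
Proof. by case: A_elab => [[+ _ _ _] _ _ _]; apply. Qed.

Lemma A1 : A 1%:M.
Proof. by case: A_elab => [[_ + _ _] _ _ _]; apply; rewrite oner_eq0. Qed.

Lemma A_mul a b : A a -> A b -> A (a *m b).
Proof. by case: A_elab => [[_ _ + _] _ _ _]; apply. Qed.

Lemma A_mxpow a k : A a -> A (mxpow a k).
Proof. by move=> Aa; elim: k => [|k IHk] /=; [exact: A1 | exact: A_mul]. Qed.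

Lemma A_mxprod r (b : 'I_r -> M) (k : 'I_r -> nat) : (forall i, A (b i)) -> A (mxprod b k).
Proof.
move=> Ab; rewrite /mxprod; elim/big_rec: _ => [|i x _ Ax]; first exact: A1.
by apply: A_mul; first exact: A_mxpow.
Qed.

Definition diagform (a : M) : M := g0 *m a *m invmx g0.

Definition eigen (a : M) (j : 'I_n) : C := diagform a j j.

Lemma diagformM a b : diagform (a *m b) = diagform a *m diagform b.
Proof. by rewrite /diagform !mulmxA mulmxKV. Qed.

Lemma diagformK a : invmx g0 *m diagform a *m g0 = a.
Proof. by rewrite /diagform !mulmxA mulVmx // mul1mx mulmxKV. Qed.

Lemma diagformE a : A a -> diagform a = diag_mx (\row_j eigen a j).
Proof.
move=> /g0_diag/is_diag_mxP a_diag; apply/matrixP => i j; rewrite [RHS]mxE [X in X *+ _]mxE.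
by have [<-|/a_diag] := eqVneq i j; rewrite ?mulr1n ?mulr0n.
Qed.

Lemma eigenM a b j : A a -> A b -> eigen (a *m b) j = eigen a j * eigen b j.
Proof.
move=> Aa Ab; rewrite /eigen diagformM (diagformE Aa) (diagformE Ab).
by rewrite mulmx_diag !mxE eqxx !mulr1n.
Qed.

Lemma eigen_scalar (c : C) j : eigen c%:M j = c.
Proof. by rewrite /eigen /diagform mul_mx_scalar -scalemxAl mulmxV // !mxE eqxx mulr1. Qed.

Lemma eigenZ (c : C) a j : eigen (c *: a) j = c * eigen a j.
Proof. by rewrite /eigen /diagform -scalemxAr -scalemxAl mxE. Qed.

Lemma eigen_neq0 a j : A a -> eigen a j != 0.
Proof.
move=> Aa; have : diagform a \in unitmx by rewrite !unitmx_mul g0_unit A_unit ?unitmx_inv.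
rewrite unitmxE (diagformE Aa) det_diag unitfE (bigD1 j) //= mulf_eq0 negb_or mxE.
by case/andP.
Qed.

Lemma eigen_mxpow a k j : A a -> eigen (mxpow a k) j = eigen a j ^+ k.
Proof.
move=> Aa; elim: k => [|k IHk]; first exact: eigen_scalar.
by rewrite [mxpow _ _.+1]/= eigenM ?IHk ?exprS //; apply: A_mxpow.
Qed.

Let i0 : 'I_n := Ordinal n_gt0.

Definition eigen_ratio a j := eigen a j / eigen a i0.

Lemma eigen_ratio_p a j : A a -> eigen_ratio a j ^+ p = 1.
Proof.
move=> Aa; have [_ _ _ /(_ a Aa) [c [c_neq0 a_p]]] := A_elab.
have eigen_p k : eigen a k ^+ p = c by rewrite -eigen_mxpow // a_p eigenZ eigen_scalar mulr1.
by rewrite exprMn exprVn !eigen_p divff // -(eigen_p i0) expf_neq0 ?eigen_neq0.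
Qed.

(* Dividing by the eigenvalue at [i0] makes the weight depend only on the
   image of [a] in [PGL_n]. *)
Definition weight a : 'rV['F_p]_n := \row_j logFp p zeta (eigen_ratio a j).

Lemma weightE a j : A a -> expo (weight a 0 j) = eigen_ratio a j.
Proof. by move=> Aa; rewrite mxE logFpK ?eigen_ratio_p. Qed.

Lemma weight_eq a (v : 'rV['F_p]_n) :
  A a -> (forall j, expo (v 0 j) = eigen_ratio a j) -> weight a = v.
Proof. by move=> Aa vE; apply/rowP => j; apply: expo_inj; rewrite weightE ?vE. Qed.

Lemma weightM a b : A a -> A b -> weight (a *m b) = weight a + weight b.
Proof.
move=> Aa Ab; apply: weight_eq => [|j]; first exact: A_mul.
rewrite /eigen_ratio !eigenM // invfM mulrACA -/(eigen_ratio a j) -/(eigen_ratio b j).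
by rewrite -(weightE j Aa) -(weightE j Ab) -expoD mxE.
Qed.

Lemma weight1 : weight 1%:M = 0.
Proof.
apply: weight_eq => [|j]; first exact: A1.
by rewrite mxE expFp0 /eigen_ratio !eigen_scalar divr1.
Qed.

Lemma weight_mxpow a k : A a -> weight (mxpow a k) = weight a *+ k.
Proof.
move=> Aa; elim: k => [|k IHk]; first exact: weight1.
by rewrite [mxpow _ _.+1]/= weightM ?IHk ?mulrS //; apply: A_mxpow.
Qed.

Lemma weight_mxprod r (b : 'I_r -> M) (k : 'I_r -> nat) : (forall i, A (b i)) ->
  weight (mxprod b k) = \sum_i (k i)%:R *: weight (b i).
Proof.
move=> Ab; suff [] : A (mxprod b k) /\ weight (mxprod b k) = \sum_i (k i)%:R *: weight (b i).
  by [].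
apply: (big_rec2 (fun x v => A x /\ weight x = v)) => [|i x v _ [Ax <-]].
  by rewrite weight1; split=> //; apply: A1.
have Abk := A_mxpow (k i) (Ab i); rewrite weightM // scaler_nat; split; first exact: A_mul.
by rewrite weight_mxpow.
Qed.

Lemma pgl_eq_weight a b : A a -> A b -> pgl_eq a b <-> weight a = weight b.
Proof.
move=> Aa Ab; split => [[c [c_neq0 a_cb]]|eq_w].
  apply: weight_eq => // j; apply: etrans (weightE j Ab) _.
  by rewrite /eigen_ratio a_cb !eigenZ invfM mulrACA divff ?mul1r.
have eigen_eq j : eigen a j = eigen a i0 / eigen b i0 * eigen b j.
  have : eigen_ratio a j = eigen_ratio b j by rewrite -(weightE j Aa) -(weightE j Ab) eq_w.
  rewrite /eigen_ratio => ratio_eq.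
  by rewrite -(divfK (eigen_neq0 i0 Aa) (eigen a j)) ratio_eq; ring.
exists (eigen a i0 / eigen b i0); split.
  by rewrite mulf_neq0 ?invr_eq0 ?eigen_neq0.
rewrite -[a in LHS]diagformK -[b in X in _ *: X]diagformK scalemxAl scalemxAr.
congr (_ *m _ *m _).
apply/matrixP => i j; rewrite (diagformE Aa) (diagformE Ab) !mxE.
by rewrite eigen_eq mulrnAr.
Qed.

Lemma mxtrace_weight a : A a -> \tr a = eigen a i0 * weight_trace zeta (weight a).
Proof.
move=> Aa; rewrite -[a in LHS]diagformK mxtrace_mulC mulmxA mulmxV // mul1mx.
rewrite (diagformE Aa) mxtrace_diag mulr_sumr; apply: eq_bigr => j _.
by rewrite weightE // mxE /eigen_ratio mulrC divfK // eigen_neq0.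
Qed.

Lemma centralizer_scalar x a : pgl_centralizer A x -> A a ->
  exists2 c, c \in [seq zeta ^+ i | i <- iota 0 p] & x *m a = c *: (a *m x).
Proof.
move=> [x_unit x_cent] Aa; have [c [c_neq0 xax]] := x_cent a Aa.
have c_p : c ^+ p = 1.
  have [_ _ _ /(_ a Aa) [d [d_neq0 a_p]]] := A_elab.
  have := mxpow_conj a p x_unit; rewrite xax mxpowZ a_p -scalemxAr -scalemxAl.
  rewrite mulmx1 mulmxV // scalerA => /(congr1 (fun X : M => X i0 i0)).
  by rewrite !mxE eqxx mulr1n !mulr1 -[RHS]mul1r => /(mulIf d_neq0).
have [i c_i] := prim_rootP zeta_prim c_p.
by exists c; [rewrite c_i map_f ?mem_iota ?add0n ?ltn_ord | rewrite scalemxAl -xax mulmxKV].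
Qed.

Lemma centralizer_commute : mx_path_connected (pgl_centralizer A) ->
  forall x a, pgl_centralizer A x -> A a -> x *m a = a *m x.
Proof.
move=> conn x a Cx Aa.
apply: (path_connected_commute n_gt0 conn _ _ _ Cx) => [|g [g_unit _]|g Cg].
- split=> [|b _]; first exact: unitmx1.
  by exists 1; rewrite oner_neq0 mul1mx invmx1 mulmx1 scale1r.
- by rewrite unitmx_mul A_unit.
- exact: centralizer_scalar.
Qed.

Definition weights (P : set M) : seq 'rV['F_p]_n :=
  [seq v <- enum 'rV['F_p]_n | `[< exists2 a, P a & weight a = v >]].

Lemma mem_weights P v : v \in weights P <-> exists2 a, P a & weight a = v.
Proof. by rewrite mem_filter mem_enum andbT; split => /asboolP. Qed.

Lemma weights_lift P (X : seq 'rV['F_p]_n) : {subset X <= weights P} ->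
  exists b : 'I_(size X) -> M, forall i, P (b i) /\ weight (b i) = X`_i.
Proof.
move=> X_sub.
suff [b bP] : {b : 'I_(size X) -> M & forall i, P (b i) /\ weight (b i) = X`_i}.
  by exists b.
apply: (@choice _ _ (fun (i : 'I_(size X)) b => P b /\ weight b = X`_i)) => i.
by have /mem_weights[a Pa wa] := X_sub _ (mem_nth 0 (ltn_ord i)); exists a.
Qed.

Definition wspace : {vspace 'rV['F_p]_n} := span (weights A).
Definition wspace_tr : {vspace 'rV['F_p]_n} :=
  span (weights (A `&` [set a | \tr a != 0])).

Lemma weight_wspace a : A a -> weight a \in wspace.
Proof. by move=> Aa; apply/memv_span/mem_weights; exists a. Qed.

Lemma weight_wspace_tr a : A a -> \tr a != 0 -> weight a \in wspace_tr.
Proof. by move=> Aa tr_a; apply/memv_span/mem_weights; exists a. Qed.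

Lemma wspaceP v : v \in wspace -> exists2 a, A a & weight a = v.
Proof.
move=> /(coord_span (X := in_tuple (weights A))) ->.
have [b bP] := weights_lift (X := weights A) (fun _ => id).
exists (mxprod b (fun i => coord (in_tuple (weights A)) i v)).
  by apply: A_mxprod => i; case: (bP i).
by rewrite weight_mxprod => [|i]; [apply: eq_bigr => i _; rewrite natr_Zp (bP i).2 | case: (bP i)].
Qed.

Lemma wspace_tr_trace v : v \in wspace -> weight_trace zeta v != 0 -> v \in wspace_tr.
Proof.
move=> /wspaceP[a Aa <-] tr_a; apply: weight_wspace_tr => //.
by rewrite mxtrace_weight // mulf_neq0 ?eigen_neq0.
Qed.

Lemma perm_mx_diagform (s : 'S_n) (chi : 'rV['F_p]_n -> 'F_p) :
  (forall j v, v \in wspace -> v 0 (s j) = v 0 j + chi v) ->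
  forall b, A b -> perm_mx s *m diagform b = expo (chi (weight b)) *: (diagform b *m perm_mx s).
Proof.
move=> s_shift b Ab.
have eigenE k : eigen b k = expo (weight b 0 k) * eigen b i0.
  by rewrite weightE // divfK // eigen_neq0.
rewrite (diagformE Ab) mul_mx_diag mul_diag_mx; apply/matrixP => i j; rewrite !mxE.
have [<-|_] := eqVneq (s i) j; last by rewrite !mulr0 mul0r.
rewrite mul1r mulr1 (eigenE (s i)) (eigenE i) s_shift ?weight_wspace //.
by rewrite expoD -mulrA mulrCA.
Qed.

Lemma shift_centralizer (s : 'S_n) (chi : 'rV['F_p]_n -> 'F_p) :
  (forall j v, v \in wspace -> v 0 (s j) = v 0 j + chi v) ->
  exists2 g, pgl_centralizer A g & forall b, A b -> g *m b = expo (chi (weight b)) *: (b *m g).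
Proof.
move=> s_shift; pose g := invmx g0 *m perm_mx s *m g0.
have g_unit : g \in unitmx by rewrite !unitmx_mul unitmx_inv g0_unit unitmx_perm.
have gb b : A b -> g *m b = expo (chi (weight b)) *: (b *m g).
  move=> Ab.
  have -> : g *m b = invmx g0 *m (perm_mx s *m diagform b) *m g0.
    by rewrite /g /diagform !mulmxA (mulmxKV g0_unit).
  have -> : b *m g = invmx g0 *m (diagform b *m perm_mx s) *m g0.
    by rewrite /g /diagform !mulmxA (mulVmx g0_unit) mul1mx.
  by rewrite (perm_mx_diagform s_shift) // -scalemxAr -scalemxAl.
exists g => //; split=> // b Ab; exists (expo (chi (weight b))).
by rewrite expFp_neq0 // gb // -scalemxAl mulmxK.
Qed.

Lemma wspace_sub_tr : (forall x a, pgl_centralizer A x -> A a -> x *m a = a *m x) ->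
  (wspace <= wspace_tr)%VS.
Proof.
move=> cent_comm; apply/subvP => v0 v0V; apply/negPn/negP => v0W.
pose u v := v - projv wspace_tr v.
have [j0 u_j0] : exists j0, u v0 0 j0 != 0.
  apply/existsP; apply: contraR v0W => /existsPn u0.
  have <- : projv wspace_tr v0 = v0; last exact: memv_proj.
  apply/esym/eqP; rewrite -subr_eq0; apply/eqP/rowP => j.
  by rewrite [RHS]mxE; apply/eqP/negPn/u0.
pose chi v := u v 0 j0.
have chiD : {morph chi : x y / x + y} by move=> x y; rewrite /chi /u linearD opprD addrACA mxE.
have chi_tr v : v \in wspace -> weight_trace zeta v != 0 -> chi v = 0.
  by move=> vV /(wspace_tr_trace vV) vW; rewrite /chi /u projv_id // subrr mxE.
have [s s_shift] := exists_perm_shift p_prime zeta_prim chiD chi_tr.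
have [g [g_unit g_cent] g_shift] := shift_centralizer s_shift.
have [a Aa wa] := wspaceP v0V.
move/eqP: (cent_comm g a (conj g_unit g_cent) Aa); rewrite g_shift //.
rewrite -subr_eq0 -{2}[a *m g]scale1r -scalerBl scalemx_eq0 subr_eq0 expFp_eq1 //.
have ag_unit : a *m g \in unitmx by rewrite unitmx_mul A_unit.
by rewrite wa /chi (negbTE u_j0) (negbTE (unitmx_neq0 n_gt0 ag_unit)).
Qed.

Lemma exists_trace_basis : (wspace <= wspace_tr)%VS ->
  exists r (b : 'I_r -> M), pgl_Fp_basis p A b /\ forall i, \tr (b i) != 0.
Proof.
move=> VW; have [Z Z_basis Z_sub] := exists_basis_sub (weights (A `&` [set a | \tr a != 0])).
have [b bP] := weights_lift Z_sub.
have Ab i : A (b i) by case: (bP i) => [[]].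
have wb i : weight (b i) = Z`_i by case: (bP i).
exists (size Z), b; split=> [|i]; last by case: (bP i) => [[]].
split=> // [a Aa|k].
  have : weight a \in <<Z>>%VS by rewrite (span_basis Z_basis); apply/(subvP VW)/weight_wspace.
  move=> /(coord_span (X := in_tuple Z)) wa.
  exists (fun i => Ordinal (ltn_Fp p_prime (coord (in_tuple Z) i (weight a)))).
  apply/pgl_eq_weight => //; first exact: A_mxprod.
  by rewrite weight_mxprod // {1}wa; apply: eq_bigr => i _; rewrite natr_Zp wb.
move=> /(pgl_eq_weight (A_mxprod _ Ab) A1); rewrite weight_mxprod // weight1 => k0 i.
have Z_free : free (in_tuple Z) := basis_free Z_basis.
have ki0 : (k i)%:R = 0 :> 'F_p.
  apply: (freeP Z_free) (fun j => (k j)%:R) _ i; rewrite -[RHS]k0.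
  by apply: eq_bigr => j _; rewrite wb.
by have := val_Fp_nat p_prime (k i); rewrite ki0 modn_small // => <-.
Qed.
End Toral.

Theorem theorem4p31 (R : realType) (n p : nat) (A : set 'M[R[i]]_n) :
  prime p -> odd p -> (0 < n)%N -> (p %| n)%N ->
  pgl_elem_abelian p A -> pgl_toral A ->
  mx_path_connected (pgl_centralizer A) ->
  exists r : nat, exists b : 'I_r -> 'M[R[i]]_n,
    pgl_Fp_basis p A b /\ (forall i, ~ pgl_conj (b i) (e_np R n p)).
Proof.
move=> p_prime p_odd n_gt0 p_dvd_n A_elab [g0 g0_unit g0_diag] conn.
have cent_comm := centralizer_commute p_prime p_odd n_gt0 A_elab conn.
have VW := wspace_sub_tr p_prime p_odd n_gt0 A_elab g0_unit g0_diag cent_comm.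
have [r [b [b_basis b_tr]]] := exists_trace_basis p_prime p_odd A_elab g0_unit g0_diag VW.
exists r, b; split=> // i /pgl_conj_mxtrace_eq0.
by rewrite mxtrace_e_np ?odd_prime_gt2 // => /(_ erefl) /eqP; rewrite (negbTE (b_tr i)).
Qed.
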